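(* Let $\Omega$ be a domain in $\mathscr H$ and $\alpha\in\{0,1\}$. Then: (1) $d_0^2=d_1^2=0$ on $C_0^\infty(\Omega,\wedge^p\mathbb C^{2n})$; (2) $d_0d_1=-d_1d_0$; (3) for $F\in C_0^\infty(\Omega,\wedge^p\mathbb C^{2n})$ and $G\in C_0^\infty(\Omega,\wedge^q\mathbb C^{2n})$, $d_\alpha(F\wedge G)=d_\alpha F\wedge G+(-1)^pF\wedge d_\alpha G$.
   Context: $\mathscr H=\mathbb R^{4n}\times\mathbb R$ with product $(x,t)\cdot(y,s)=\big(x+y,\,t+s+2\sum_{l=1}^{2n}(x_{2l-1}y_{2l}-x_{2l}y_{2l-1})\big)$ and vector fields $X_{2l-1}=\partial_{x_{2l-1}}-2x_{2l}\partial_t$, $X_{2l}=\partial_{x_{2l}}+2x_{2l-1}\partial_t$ ($l=1,\dots,2n$). With $\mathbf i$ the complex imaginary unit, for $l=0,\dots,n-1$ define $Z_{l0'}=X_{4l+1}+\mathbf iX_{4l+2}$, $Z_{l1'}=-X_{4l+3}-\mathbf iX_{4l+4}$, $Z_{(n+l)0'}=X_{4l+3}-\mathbf iX_{4l+4}$, $Z_{(n+l)1'}=X_{4l+1}-\mathbf iX_{4l+2}$. Fix a basis $\omega^0,\dots,\omega^{2n-1}$ of $\mathbb C^{2n}$; for $F=\sum_If_I\omega^I$ ($\omega^I=\omega^{i_1}\wedge\cdots\wedge\omega^{i_p}$) define $d_\alpha F=\sum_I\sum_{A=0}^{2n-1}Z_{A\alpha'}f_I\,\omega^A\wedge\omega^I$,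 $\alpha=0,1$. *)

From HB Require Import structures.
From mathcomp Require Import all_boot all_order all_algebra.
From mathcomp Require Import all_classical all_reals all_analysis.
From mathcomp.real_closed Require Import complex.
Set Implicit Arguments. Unset Strict Implicit. Unset Printing Implicit Defensive.
Import Order.TTheory GRing.Theory Num.Theory.
Import numFieldNormedType.Exports.
Local Open Scope ring_scope.

(* Points of the quaternionic Heisenberg group H = R^{4n} x R, as row vectors
   of length 4n+1: entries 0..4n-1 are x_1..x_{4n}, the last entry is t. *)
Definition pt (R : realType) (n : nat) := 'rV[R]_((4 * n).+1).

Section Heis.
Variables (R : realType) (n : nat).
Local Notation P := (pt R n).
Local Notation C := (R[i]).

Definition evec (j : 'I_((4 * n).+1)) : P := delta_mx 0 j.

(* coordinate x_k, 1-based (k = 1..4n) *)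
Definition xco (k : nat) (x : P) : R := x ord0 (inord k.-1).
Definition pdir (j : 'I_((4 * n).+1)) (g : P -> R) : P -> R :=
  fun x => derive g x (evec j).
Definition pdx (k : nat) (g : P -> R) : P -> R := pdir (inord k.-1) g.
Definition pdt (g : P -> R) : P -> R := pdir ord_max g.

Definition Xr (k : nat) (g : P -> R) : P -> R := fun x =>
  if odd k then pdx k g x - 2 * xco k.+1 x * pdt g x
  else pdx k g x + 2 * xco k.-1 x * pdt g x.

Definition Xc (k : nat) (f : P -> C) : P -> C := fun x =>
  Complex (Xr k (fun y => complex.Re (f y)) x) (Xr k (fun y => complex.Im (f y)) x).

(* Z_{A alpha'}, A = 0..2n-1, alpha = false (0') or true (1') *)
Definition Zop (A : 'I_(2 * n)) (alpha : bool) (f : P -> C) : P -> C :=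
  fun x =>
  let i := Complex (0 : R) 1 in
  if (A < n)%N then
    let l := val A in
    if ~~ alpha then Xc (4 * l + 1) f x + i * Xc (4 * l + 2) f x
    else - Xc (4 * l + 3) f x - i * Xc (4 * l + 4) f x
  else
    let l := (val A - n)%N in
    if ~~ alpha then Xc (4 * l + 3) f x - i * Xc (4 * l + 4) f x
    else Xc (4 * l + 1) f x - i * Xc (4 * l + 2) f x.

(* Forms F = sum_I f_I omega^I, with omega^0..omega^{2n-1} the fixed basis of
   C^{2n}: a hform is the family of its coefficient functions indexed by the
   subsets I of {0,..,2n-1} (omega^I = omega^{i_1} /\ ... /\ omega^{i_p},
   i_1 < ... < i_p). *)
Definition hform := {set 'I_(2 * n)} -> P -> C.

Definition is_pform (p : nat) (F : hform) : Prop :=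
  forall I : {set 'I_(2 * n)}, #|I| != p -> F I = (fun _ => 0).

(* omega^I /\ omega^J = wsgn I J omega^(I u J) when I, J disjoint (else 0) *)
Definition wsgn (I J : {set 'I_(2 * n)}) : C :=
  (-1) ^+ #|[set ij : 'I_(2 * n) * 'I_(2 * n) |
              [&& ij.1 \in I, ij.2 \in J & (ij.2 < ij.1)%N]]|.

Definition wedge (F G : hform) : hform := fun K x =>
  \sum_(I : {set 'I_(2 * n)}) \sum_(J : {set 'I_(2 * n)})
     (if [disjoint I & J] && (I :|: J == K) then wsgn I J * (F I x * G J x)
      else 0).

Definition dop (alpha : bool) (F : hform) : hform := fun K x =>
  \sum_(I : {set 'I_(2 * n)}) \sum_(A : 'I_(2 * n))
     (if (A \notin I) && (A |: I == K) then wsgn [set A] I * Zop A alpha (F I) x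
      else 0).

Definition zero_form : hform := fun _ _ => 0.

Definition iter_pd (ks : seq 'I_((4 * n).+1)) (g : P -> R) : P -> R :=
  foldr pdir g ks.
Definition smooth (g : P -> R) : Prop :=
  forall ks : seq 'I_((4 * n).+1),
    continuous (iter_pd ks g) /\
    forall (j : 'I_((4 * n).+1)) (x : P), derivable (iter_pd ks g) x (evec j).

(* C_0^infty(Omega, C): smooth (real and imaginary parts) with compact support
   contained in Omega (extended by zero outside Omega) *)
Definition C0inf (Omega : set P) (f : P -> C) : Prop :=
  smooth (fun x => complex.Re (f x)) /\ smooth (fun x => complex.Im (f x)) /\
  compact (closure [set x | f x != 0]%classic) /\
  (closure [set x | f x != 0]%classic `<=` Omega)%classic.

Definition C0inf_form (Omega : set P) (p : nat) (F : hform) : Prop :=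
  is_pform p F /\ forall I : {set 'I_(2 * n)}, C0inf Omega (F I).

Definition domain (Omega : set P) : Prop :=
  open Omega /\ connected Omega /\ (Omega !=set0)%classic.

End Heis.

From HB Require Import structures.
From mathcomp Require Import all_boot all_order all_algebra.
From mathcomp Require Import all_classical all_reals all_analysis.
From mathcomp.real_closed Require Import complex.
From mathcomp.algebra_tactics Require Import ring lra.
From mathcomp.zify Require Import zify.
Import Order.TTheory GRing.Theory Num.Theory.
Import numFieldNormedType.Exports.
Set Implicit Arguments. Unset Strict Implicit. Unset Printing Implicit Defensive.
Local Open Scope classical_set_scope.
Local Open Scope ring_scope.

(* Each Z_{A alpha'} is a complex combination c1 X_{2m+1} + c2 X_{2m+2} of two of the
   fields X_k, and the X_k are first-order operators, so Z_{A alpha'} satisfies the product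
   rule; together with omega^A /\ omega^I = (-1)^|I| omega^I /\ omega^A this gives the graded
   Leibniz rule. In d_alpha d_beta the coefficient of Z_A Z_B is antisymmetric in (A, B),
   so only the commutators [Z_{A alpha'}, Z_{B beta'}] survive. By Schwarz's theorem the X_k
   commute except for [X_{2l-1}, X_{2l}] = 4 d_t, so these commutators are multiples of d_t;
   the multiple vanishes for alpha = beta (d_alpha^2 = 0), and for alpha <> beta the
   combination [Z_{A0'}, Z_{B1'}] - [Z_{B0'}, Z_{A1'}] vanishes (d_0 d_1 = - d_1 d_0). *)

Section Schwarz.
Variables (R : realType) (V : normedModType R).
Implicit Types (g : V -> R) (u v x y : V).

Lemma is_derive_along_line g u y (s : R) : derivable g (s *: u + y) u ->
  is_derive s 1 (fun r => g (r *: u + y)) ('D_u g (s *: u + y)).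
Proof.
have quotientE : (fun h : R => h^-1 *: (((fun r => g (r *: u + y)) \o shift s) (h *: 1)
     - g (s *: u + y))) =
   (fun h : R => h^-1 *: ((g \o shift (s *: u + y)) (h *: u) - g (s *: u + y))).
  apply/funext => h /=; congr (_ *: (g _ - _)).
  by rewrite /shift /= -[h *: (1 : R)]/(h * 1) mulr1 scalerDl addrA.
by move=> dg; split; [rewrite /derivable quotientE | rewrite /derive quotientE].
Qed.

Lemma second_difference_mvt g u v x (h : R) : 0 < h ->
  (forall y, derivable g y u) -> (forall y, derivable ('D_u g) y v) ->
  exists c1 c2, [/\ 0 <= c1 <= h, 0 <= c2 <= h &
   g (h *: u + (h *: v + x)) - g (h *: u + x) - (g (h *: v + x) - g x)
   = h * h * 'D_v ('D_u g) (c2 *: v + (c1 *: u + x))].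
Proof.
move=> h0 dgu dguv.
pose phi r := g (r *: u + (h *: v + x)) - g (r *: u + x).
have dphi r : is_derive r (1 : R) phi
    ('D_u g (r *: u + (h *: v + x)) - 'D_u g (r *: u + x)).
  by apply: is_deriveB; apply: is_derive_along_line.
have [c1 c1in E1] := MVT_segment (ltW h0) (fun r _ => dphi r)
  (derivable_within_continuous (fun r _ => @ex_derive _ _ _ _ _ _ _ (dphi r))).
pose psi r := 'D_u g (r *: v + (c1 *: u + x)).
have dpsi r : is_derive r (1 : R) psi ('D_v ('D_u g) (r *: v + (c1 *: u + x))).
  exact: is_derive_along_line.
have [c2 c2in E2] := MVT_segment (ltW h0) (fun r _ => dpsi r)
  (derivable_within_continuous (fun r _ => @ex_derive _ _ _ _ _ _ _ (dpsi r))).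
exists c1, c2; split; [by move: c1in; rewrite in_itv | by move: c2in; rewrite in_itv|].
move: E1 E2; rewrite /phi /psi !scale0r !add0r subr0 (addrCA (c1 *: u)) => -> ->.
ring.
Qed.

Lemma schwarz_derive g u v x :
  (forall y, derivable g y u) -> (forall y, derivable g y v) ->
  (forall y, derivable ('D_u g) y v) -> (forall y, derivable ('D_v g) y u) ->
  {for x, continuous ('D_v ('D_u g))} -> {for x, continuous ('D_u ('D_v g))} ->
  'D_v ('D_u g) x = 'D_u ('D_v g) x.
Proof.
move=> dgu dgv dguv dgvu cuv cvu.
apply/eqP; rewrite -subr_eq0 -normr_le0; apply/ler_addgt0Pr => e e0; rewrite add0r.
have e20 : 0 < e / 2 by rewrite divr_gt0.
have /nbhs_normP [d1 d10 near_uv] :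
    \forall y \near x, `|'D_v ('D_u g) x - 'D_v ('D_u g) y| < e / 2.
  by move/cvgrPdist_lt: cuv; apply.
have /nbhs_normP [d2 d20 near_vu] :
    \forall y \near x, `|'D_u ('D_v g) x - 'D_u ('D_v g) y| < e / 2.
  by move/cvgrPdist_lt: cvu; apply.
pose d := Num.min d1 d2.
have d0 : 0 < d by rewrite lt_min d10 d20.
have [dd1 dd2] : d <= d1 /\ d <= d2 by rewrite !ge_min !lexx orbT.
pose N := `|u| + `|v| + 1.
have N0 : 0 < N by rewrite /N ltr_wpDl ?addr_ge0.
pose h := d / (2 * N).
have h0 : 0 < h by rewrite divr_gt0 ?mulr_gt0.
have hN : h * (`|u| + `|v|) < d.
  have -> : d = h * (2 * N) by rewrite /h mulfVK // mulf_neq0 ?lt0r_neq0.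
  rewrite ltr_pM2l // /N; have := normr_ge0 u; have := normr_ge0 v; lra.
have near_x c1 c2 (w1 w2 : V) : 0 <= c1 <= h -> 0 <= c2 <= h ->
    `|w1| + `|w2| = `|u| + `|v| -> `|x - (c2 *: w2 + (c1 *: w1 + x))| < d.
  move=> /andP[c10 c1h] /andP[c20 c2h] Ew.
  rewrite addrA opprD addrCA subrr addr0 normrN.
  apply: (le_lt_trans (ler_normD _ _)); rewrite !normrZ !ger0_norm //.
  apply: le_lt_trans hN; rewrite -Ew mulrDr addrC.
  by apply: lerD; apply: ler_wpM2r.
have [k1 [k2 [k1h k2h Ek]]] := second_difference_mvt x h0 dgu dguv.
have [l1 [l2 [l1h l2h El]]] := second_difference_mvt x h0 dgv dgvu.
pose pk := k2 *: v + (k1 *: u + x); pose pl := l2 *: u + (l1 *: v + x).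
have Ak : `|'D_v ('D_u g) x - 'D_v ('D_u g) pk| < e / 2.
  exact: near_uv (lt_le_trans (near_x _ _ u v k1h k2h erefl) dd1).
have Al : `|'D_u ('D_v g) x - 'D_u ('D_v g) pl| < e / 2.
  exact: near_vu (lt_le_trans (near_x _ _ v u l1h l2h (addrC _ _)) dd2).
have Ekl : 'D_v ('D_u g) pk = 'D_u ('D_v g) pl.
  apply: (mulfI (_ : h * h != 0)); first by rewrite mulf_neq0 ?lt0r_neq0.
  rewrite -Ek -El (addrCA (h *: u)); ring.
rewrite -Ekl distrC in Al.
have := ler_distD ('D_v ('D_u g) pk) ('D_v ('D_u g) x) ('D_u ('D_v g) x).
move: Ak Al; move: ('D_v ('D_u g) pk) ('D_v ('D_u g) x) ('D_u ('D_v g) x) => a b c.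
lra.
Qed.

End Schwarz.

Section PartialDerivatives.
Variables (R : realType) (n : nat).
Local Notation P := (pt R n).
Local Notation I4 := 'I_((4 * n).+1).
Implicit Types (g h : P -> R) (i j : I4) (x : P).

Definition partially_derivable g := forall j x, derivable g x (evec R j).

Lemma smooth_pdir j g : smooth g -> smooth (pdir j g).
Proof. by move=> sg ks; have := sg (ks ++ [:: j]); rewrite /iter_pd foldr_cat. Qed.

Lemma smooth_partially_derivable g : smooth g -> partially_derivable g.
Proof. by move=> sg j x; have [_] := sg [::]; apply. Qed.

Lemma smooth_continuous g x : smooth g -> {for x, continuous g}.
Proof. by move=> sg; have [c _] := sg [::]; exact: c. Qed.

Lemma pdirC i j g : smooth g -> pdir i (pdir j g) = pdir j (pdir i g).
Proof.
move=> sg; apply/funext => x; rewrite /pdir.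
have [sgi sgj] := (smooth_pdir i sg, smooth_pdir j sg).
apply: (@schwarz_derive R P).
- exact: smooth_partially_derivable sg j.
- exact: smooth_partially_derivable sg i.
- exact: smooth_partially_derivable sgj i.
- exact: smooth_partially_derivable sgi j.
- exact: smooth_continuous x (smooth_pdir i sgj).
- exact: smooth_continuous x (smooth_pdir j sgi).
Qed.

Lemma partially_derivableD g h : partially_derivable g -> partially_derivable h ->
  partially_derivable (fun y => g y + h y).
Proof. by move=> dg dh j x; apply: derivableD. Qed.

Lemma partially_derivableZ (a : R) g : partially_derivable g ->
  partially_derivable (fun y => a * g y).
Proof. by move=> dg j x; apply: derivableZ. Qed.

Lemma partially_derivableM g h : partially_derivable g -> partially_derivable h ->
  partially_derivable (fun y => g y * h y).
Proof. by move=> dg dh j x; apply: derivableM. Qed.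

Lemma partially_derivable_cst (a : R) : partially_derivable (fun _ => a).
Proof. by move=> j x; apply: derivable_cst. Qed.

Lemma pdirD i g h x : partially_derivable g -> partially_derivable h ->
  pdir i (fun y => g y + h y) x = pdir i g x + pdir i h x.
Proof. by move=> dg dh; apply: deriveD. Qed.

Lemma pdirZ i (a : R) g x : partially_derivable g ->
  pdir i (fun y => a * g y) x = a * pdir i g x.
Proof. by move=> dg; apply: deriveZ. Qed.

Lemma pdirM i g h x : partially_derivable g -> partially_derivable h ->
  pdir i (fun y => g y * h y) x = pdir i g x * h x + g x * pdir i h x.
Proof. by move=> dg dh; rewrite /pdir deriveM // addrC mulrC. Qed.

Lemma derivable_coord j x (v : P) :
  derivable (fun y : P => y ord0 j) x v /\ 'D_v (fun y : P => y ord0 j) x = v ord0 j.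
Proof.
have E : (fun h : R => h^-1 *: (((fun y : P => y ord0 j) \o shift x) (h *: v) - x ord0 j))
   @ 0^' --> v ord0 j.
  apply: (cvg_near_cst (v ord0 j)); near=> h.
  rewrite /= !mxE addrK /GRing.scale /= mulrA mulVf ?mul1r //.
  by near: h; exact: nbhs_dnbhs_neq.
by split; [apply/cvg_ex; exists (v ord0 j) | exact: cvg_lim E].
Unshelve. all: by end_near.
Qed.

Lemma partially_derivable_coord j : partially_derivable (fun y => y ord0 j).
Proof. by move=> k x; have [] := derivable_coord j x (evec R k). Qed.

Lemma pdir_coord i j x : pdir i (fun y => y ord0 j) x = (i == j)%:R.
Proof.
rewrite /pdir; have [_ ->] := derivable_coord j x (evec R i).
by rewrite /evec mxE eqxx eq_sym.
Qed.

End PartialDerivatives.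

Section Derivations.
Variables (T : Type) (K : comPzRingType) (S : (T -> K) -> Prop).

Definition derivation_on (D : (T -> K) -> T -> K) : Prop :=
  [/\ forall g h x, S g -> S h -> D (fun y => g y + h y) x = D g x + D h x,
      forall a g x, S g -> D (fun y => a * g y) x = a * D g x &
      forall g h x, S g -> S h -> D (fun y => g y * h y) x = D g x * h x + g x * D h x].

Variable D : (T -> K) -> T -> K.
Hypothesis DD : derivation_on D.

Lemma derivationD g h x : S g -> S h -> D (fun y => g y + h y) x = D g x + D h x.
Proof. by case: DD => + _ _; apply. Qed.

Lemma derivationZ a g x : S g -> D (fun y => a * g y) x = a * D g x.
Proof. by case: DD => _ + _; apply. Qed.

Lemma derivationM g h x : S g -> S h ->
  D (fun y => g y * h y) x = D g x * h x + g x * D h x.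
Proof. by case: DD => _ _; apply. Qed.

Lemma derivation0 x : S (fun _ => 0) -> D (fun _ => 0) x = 0.
Proof.
move=> S0; rewrite -[RHS](mul0r (D (fun _ => 0) x)) -derivationZ //.
by congr (D _ x); apply/funext => y; rewrite mul0r.
Qed.

Hypotheses (S0 : S (fun _ => 0)) (SD : forall g h, S g -> S h -> S (fun y => g y + h y)).

Lemma S_sum (I : Type) (r : seq I) (P : pred I) (F : I -> T -> K) :
  (forall i, S (F i)) -> S (fun y => \sum_(i <- r | P i) F i y).
Proof.
move=> SF; under eq_fun do rewrite -big_filter.
elim: [seq i <- r | P i] => [|i s IHs]; first by under eq_fun do rewrite big_nil.
by under eq_fun do rewrite big_cons; apply: SD.
Qed.

Lemma derivation_sum (I : Type) (r : seq I) (P : pred I) (F : I -> T -> K) x :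
  (forall i, S (F i)) ->
  D (fun y => \sum_(i <- r | P i) F i y) x = \sum_(i <- r | P i) D (F i) x.
Proof.
move=> SF; under eq_fun do rewrite -big_filter; rewrite -big_filter.
elim: [seq i <- r | P i] => [|i s IHs].
  by under eq_fun do rewrite big_nil; rewrite derivation0 // big_nil.
under eq_fun do rewrite big_cons; rewrite derivationD ?IHs ?big_cons //.
exact: S_sum.
Qed.

Hypothesis SZ : forall a g, S g -> S (fun y => a * g y).

Lemma derivation_sum2 (I J : Type) (r : seq I) (s : seq J) (P : I -> J -> bool)
    (w : I -> J -> K) (F : I -> J -> T -> K) x : (forall i j, S (F i j)) ->
  D (fun y => \sum_(i <- r) \sum_(j <- s) (if P i j then w i j * F i j y else 0)) x =
  \sum_(i <- r) \sum_(j <- s) (if P i j then w i j * D (F i j) x else 0).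
Proof.
move=> SF; under eq_fun do under eq_bigr do rewrite -big_mkcond.
rewrite derivation_sum; last by move=> i; apply: S_sum => j; apply: SZ.
apply: eq_bigr => i _; rewrite derivation_sum ?big_mkcond; last by move=> j; apply: SZ.
by apply: eq_bigr => j _; case: ifP => // _; rewrite derivationZ.
Qed.

End Derivations.

Lemma derivation_on_comb (T : Type) (K : comPzRingType) (S : (T -> K) -> Prop)
    (D1 D2 : (T -> K) -> T -> K) (c1 c2 : T -> K) :
  derivation_on S D1 -> derivation_on S D2 ->
  derivation_on S (fun g x => c1 x * D1 g x + c2 x * D2 g x).
Proof.
move=> d1 d2; split=> [g h x Sg Sh | a g x Sg | g h x Sg Sh].
- by rewrite (derivationD d1) // (derivationD d2) //; ring.
- by rewrite (derivationZ d1) // (derivationZ d2) //; ring.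
- by rewrite (derivationM d1) // (derivationM d2) //; ring.
Qed.

(* [ring] compares atoms up to conversion and would unfold the limits hidden in
   [derive]; abstracting the derivatives first keeps it syntactic. *)
Ltac abstract_derivatives := repeat match goal with
  | |- context [pdir ?i ?g ?x] => generalize (pdir i g x); intro
  | |- context [Xc ?k ?f ?x] => generalize (Xc k f x); intro
  end.

Section HorizontalFields.
Variables (R : realType) (n : nat).
Local Notation P := (pt R n).
Local Notation I4 := 'I_((4 * n).+1).
Local Notation t := (@ord_max (4 * n)).
Implicit Types (g : P -> R) (i j : I4) (s : R) (x : P).

Lemma pdir_derivation i : derivation_on (@partially_derivable R n) (pdir i).
Proof.
split=> [g h x | a g x | g h x]; [exact: pdirD | exact: pdirZ | exact: pdirM].
Qed.

Definition hfield i j s g : P -> R := fun x => pdir i g x + s * x ord0 j * pdt g x.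

Lemma hfield_derivation i j s : derivation_on (@partially_derivable R n) (hfield i j s).
Proof.
have := derivation_on_comb (fun _ => 1) (fun x => s * x ord0 j)
  (pdir_derivation i) (pdir_derivation t).
by congr derivation_on; apply/funext => g; apply/funext => x; rewrite mul1r.
Qed.

Lemma partially_derivable_hfield i j s g : smooth g -> partially_derivable (hfield i j s g).
Proof.
move=> sg; apply: partially_derivableD.
  exact: smooth_partially_derivable (smooth_pdir i sg).
apply: partially_derivableM; first exact/partially_derivableZ/partially_derivable_coord.
exact: smooth_partially_derivable (smooth_pdir t sg).
Qed.

Lemma pdir_hfield k i j s g x : smooth g ->
  pdir k (hfield i j s g) x = pdir k (pdir i g) x +
     s * ((k == j)%:R * pdt g x + x ord0 j * pdir k (pdt g) x).
Proof.
move=> sg; have dgi := smooth_partially_derivable (smooth_pdir i sg).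
have dgt := smooth_partially_derivable (smooth_pdir t sg).
have dxj := partially_derivableZ (a := s) (@partially_derivable_coord _ _ j).
rewrite /hfield (pdirD _ _ dgi (partially_derivableM dxj dgt)) (pdirM _ _ dxj dgt).
rewrite (pdirZ _ _ _ (@partially_derivable_coord _ _ j)).
by rewrite pdir_coord mulrDr !mulrA.
Qed.

(* Only the t-derivative of the coefficient x_j survives, since j <> t. *)
Lemma hfield_commutator i j s i' j' s' g x : smooth g -> j != t -> j' != t ->
  hfield i j s (hfield i' j' s' g) x - hfield i' j' s' (hfield i j s g) x =
  (s' * (i == j')%:R - s * (i' == j)%:R) * pdt g x.
Proof.
move=> sg jt j't; rewrite /hfield [in LHS]/pdt !pdir_hfield //.
rewrite (eq_sym t j') (negbTE j't) (eq_sym t j) (negbTE jt) /pdt.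
rewrite (pdirC i i' sg) (pdirC i t sg) (pdirC i' t sg).
rewrite [false%:R]/=; abstract_derivatives; ring.
Qed.

End HorizontalFields.

Section HeisenbergFields.
Variables (R : realType) (n : nat).
Local Notation P := (pt R n).
Local Notation I4 := 'I_((4 * n).+1).
Local Notation t := (@ord_max (4 * n)).
Implicit Types (g : P -> R) (x : P) (k l : nat).

Lemma XrE k : @Xr R n k = hfield (inord k.-1) (inord (if odd k then k else k.-2))
                            (if odd k then -2 else 2).
Proof.
apply/funext => g; apply/funext => x; rewrite /Xr /hfield /xco /pdx /pdt.
by case: (odd k) => /=; abstract_derivatives; ring.
Qed.

Lemma Xr_derivation k : derivation_on (@partially_derivable R n) (Xr k).
Proof. by rewrite XrE; apply: hfield_derivation. Qed.

Lemma partially_derivable_Xr k g : smooth g -> partially_derivable (Xr k g).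
Proof. by rewrite XrE; apply: partially_derivable_hfield. Qed.

(* Structure constants of the Heisenberg algebra: [X_{2l-1}, X_{2l}] = 4 d_t. *)
Definition heis_bracket k l : R :=
  if odd k && (l == k.+1) then 4 else if odd l && (k == l.+1) then -4 else 0.

Lemma Xr_commutator k l g x : (0 < k <= 4 * n)%N -> (0 < l <= 4 * n)%N -> smooth g ->
  Xr k (Xr l g) x - Xr l (Xr k g) x = heis_bracket k l * pdt g x.
Proof.
move=> /andP[k0 kn] /andP[l0 ln] sg.
have inord_eq a b : (a <= 4 * n)%N -> (b <= 4 * n)%N ->
    (inord a == inord b :> I4) = (a == b).
  by move=> an bn; rewrite -val_eqE /= !inordK ?ltnS.
have not_t a : (a < 4 * n)%N -> inord a != t.
  by move=> an; apply/eqP => /(congr1 val); rewrite /= inordK //; lia.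
rewrite !XrE hfield_commutator //; last 2 first.
- by apply: not_t; case: ifP => ol; lia.
- by apply: not_t; case: ifP => ok; lia.
congr (_ * _); rewrite /heis_bracket.
case: (boolP (odd k)) => ok; case: (boolP (odd l)) => ol /=;
  rewrite !inord_eq; try lia.
all: by repeat case: eqP => ? /=; first [exfalso; lia | ring].
Qed.

End HeisenbergFields.

Local Open Scope complex_scope.

Section Complexification.
Variables (R : realType) (n : nat).
Local Notation P := (pt R n).
Local Notation C := R[i].
Implicit Types (f g : P -> C) (D E : (P -> R) -> P -> R).

Definition partially_derivableC f :=
  partially_derivable (fun y => complex.Re (f y)) /\
  partially_derivable (fun y => complex.Im (f y)).

Definition smoothC f :=
  smooth (fun y => complex.Re (f y)) /\ smooth (fun y => complex.Im (f y)).

Definition cplx D f : P -> C :=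
  fun x => Complex (D (fun y => complex.Re (f y)) x) (D (fun y => complex.Im (f y)) x).

Lemma smoothC_partially_derivable f : smoothC f -> partially_derivableC f.
Proof. by case=> sr si; split; apply: smooth_partially_derivable. Qed.

Lemma partially_derivableC_cplx D f :
  (forall h : P -> R, smooth h -> partially_derivable (D h)) -> smoothC f ->
  partially_derivableC (cplx D f).
Proof. by move=> dD [sr si]; split; apply: dD. Qed.

Lemma Re_funD f g :
  (fun y => complex.Re (f y + g y)) = (fun y => complex.Re (f y) + complex.Re (g y)).
Proof. by apply/funext => y; case: (f y) (g y) => [? ?] [? ?]. Qed.

Lemma Im_funD f g :
  (fun y => complex.Im (f y + g y)) = (fun y => complex.Im (f y) + complex.Im (g y)).
Proof. by apply/funext => y; case: (f y) (g y) => [? ?] [? ?]. Qed.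

Lemma Re_funM f g : (fun y => complex.Re (f y * g y)) =
  (fun y => complex.Re (f y) * complex.Re (g y) + (-1) * (complex.Im (f y) * complex.Im (g y))).
Proof. by apply/funext => y; case: (f y) (g y) => [? ?] [? ?] /=; rewrite mulN1r. Qed.

Lemma Im_funM f g : (fun y => complex.Im (f y * g y)) =
  (fun y => complex.Re (f y) * complex.Im (g y) + complex.Im (f y) * complex.Re (g y)).
Proof. by apply/funext => y; case: (f y) (g y) => [? ?] [? ?]. Qed.

Lemma partially_derivableC_add f g : partially_derivableC f -> partially_derivableC g ->
  partially_derivableC (fun y => f y + g y).
Proof.
by move=> [f1 f2] [g1 g2]; split; rewrite ?Re_funD ?Im_funD; apply: partially_derivableD.
Qed.

Lemma partially_derivableC_mul f g : partially_derivableC f -> partially_derivableC g ->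
  partially_derivableC (fun y => f y * g y).
Proof.
move=> [f1 f2] [g1 g2]; split; rewrite ?Re_funM ?Im_funM; apply: partially_derivableD.
- exact: partially_derivableM.
- exact/partially_derivableZ/partially_derivableM.
- exact: partially_derivableM.
- exact: partially_derivableM.
Qed.

Lemma partially_derivableC_cst (c : C) : partially_derivableC (fun _ => c).
Proof. by split; apply: partially_derivable_cst. Qed.

Lemma partially_derivableC_scale (c : C) f : partially_derivableC f ->
  partially_derivableC (fun y => c * f y).
Proof. exact: partially_derivableC_mul (partially_derivableC_cst c). Qed.

Lemma Re_funZ (c : C) f : (fun y => complex.Re (c * f y)) =
  (fun y => complex.Re c * complex.Re (f y) + (- complex.Im c) * complex.Im (f y)).
Proof. by apply/funext => y; case: c (f y) => [a b] [u v] /=; ring. Qed.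

Lemma Im_funZ (c : C) f : (fun y => complex.Im (c * f y)) =
  (fun y => complex.Re c * complex.Im (f y) + complex.Im c * complex.Re (f y)).
Proof. by apply/funext => y; case: c (f y) => [? ?] [? ?]. Qed.

Lemma cplx_derivation D : derivation_on (@partially_derivable R n) D ->
  derivation_on partially_derivableC (cplx D).
Proof.
move=> dD; rewrite /cplx.
split=> [f g x [f1 f2] [g1 g2] | c f x [f1 f2] | f g x [f1 f2] [g1 g2]].
- by rewrite Re_funD Im_funD !(derivationD dD).
- rewrite Re_funZ Im_funZ.
  rewrite (derivationD dD _ (partially_derivableZ f1) (partially_derivableZ f2)).
  rewrite (derivationD dD _ (partially_derivableZ f2) (partially_derivableZ f1)).
  rewrite !(derivationZ dD) //; case: c => a b.
  move: (D (fun y => complex.Re (f y)) x) (D (fun y => complex.Im (f y)) x) => u v.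
  by rewrite /=; congr Complex; ring.
- rewrite Re_funM Im_funM.
  rewrite (derivationD dD _ (partially_derivableM f1 g1)
                             (partially_derivableZ (partially_derivableM f2 g2))).
  rewrite (derivationD dD _ (partially_derivableM f1 g2) (partially_derivableM f2 g1)).
  rewrite (derivationZ dD _ _ (partially_derivableM f2 g2)) !(derivationM dD) //.
  move: (D (fun y => complex.Re (f y)) x) (D (fun y => complex.Im (f y)) x) => u v.
  move: (D (fun y => complex.Re (g y)) x) (D (fun y => complex.Im (g y)) x) => u' v'.
  by move: (f x) (g x) => [a b] [c d] /=; congr Complex; ring.
Qed.

Lemma cplx_commutator D E T (c : R) f x :
  (forall h, smooth h -> D (E h) x - E (D h) x = c * T h x) -> smoothC f ->
  cplx D (cplx E f) x - cplx E (cplx D f) x = c%:C * cplx T f x.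
Proof.
move=> DE [sr si]; apply/eqP; rewrite eq_complex /= (DE _ sr) (DE _ si).
by rewrite !mul0r subr0 addr0 !eqxx.
Qed.

End Complexification.

Section ZOperators.
Variables (R : realType) (n : nat).
Local Notation P := (pt R n).
Local Notation C := R[i].
Implicit Types (f : P -> C) (x : P) (m : nat) (A B : 'I_(2 * n)) (a b : bool).

Definition zpair m (c1 c2 : C) f : P -> C :=
  fun x => c1 * Xc (2 * m).+1 f x + c2 * Xc (2 * m).+2 f x.

(* Read off from the definition of [Zop]:
   Z_{A alpha'} = zcoef1 A alpha * X_{2m+1} + zcoef2 A alpha * X_{2m+2}, m = zindex A alpha. *)
Definition zindex A a : nat :=
  if (A < n)%N then (2 * A + a)%N else (2 * (A - n) + ~~ a)%N.
Definition zcoef1 A a : C := if (A < n)%N && a then -1 else 1.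
Definition zcoef2 A a : C :=
  if (A < n)%N then (if a then - 'i else 'i) else - 'i.

Lemma ZopE A a : Zop A a = zpair (zindex A a) (zcoef1 A a) (zcoef2 A a).
Proof.
apply/funext => f; apply/funext => x; rewrite /Zop /zpair /zindex /zcoef1 /zcoef2.
case: ifP => An; case: a => /=.
- have -> : (4 * A + 3 = (2 * (2 * A + 1)).+1)%N by lia.
  have -> : (4 * A + 4 = (2 * (2 * A + 1)).+2)%N by lia.
  by rewrite mulN1r mulNr.
- have -> : (4 * A + 1 = (2 * (2 * A + 0)).+1)%N by lia.
  have -> : (4 * A + 2 = (2 * (2 * A + 0)).+2)%N by lia.
  by rewrite mul1r.
- have -> : (4 * (A - n) + 1 = (2 * (2 * (A - n) + 0)).+1)%N by lia.
  have -> : (4 * (A - n) + 2 = (2 * (2 * (A - n) + 0)).+2)%N by lia.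
  by rewrite mul1r mulNr.
- have -> : (4 * (A - n) + 3 = (2 * (2 * (A - n) + 1)).+1)%N by lia.
  have -> : (4 * (A - n) + 4 = (2 * (2 * (A - n) + 1)).+2)%N by lia.
  by rewrite mul1r mulNr.
Qed.

Lemma zpairE m (c1 c2 : C) f x :
  zpair m c1 c2 f x = c1 * Xc (2 * m).+1 f x + c2 * Xc (2 * m).+2 f x.
Proof. by []. Qed.

Lemma zindex_lt A a : (zindex A a < 2 * n)%N.
Proof. by have := ltn_ord A; rewrite /zindex; case: ifP; case: a => /=; lia. Qed.

Lemma zindex_inj a : injective (zindex ^~ a).
Proof.
move=> A B; rewrite /zindex => h; apply/val_inj; move: h; have := ltn_ord A; have := ltn_ord B.
by case: (ltnP A n); case: (ltnP B n); case: a => /=; lia.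
Qed.

Lemma Xc_derivation k : derivation_on (@partially_derivableC R n) (Xc k).
Proof. exact/cplx_derivation/Xr_derivation. Qed.

Lemma partially_derivableC_Xc k f : smoothC f -> partially_derivableC (Xc k f).
Proof. by apply: partially_derivableC_cplx => g; apply: partially_derivable_Xr. Qed.

Lemma zpair_derivation m c1 c2 : derivation_on (@partially_derivableC R n) (zpair m c1 c2).
Proof. exact: derivation_on_comb (Xc_derivation _) (Xc_derivation _). Qed.

Lemma Zop_derivation A a : derivation_on (@partially_derivableC R n) (Zop A a).
Proof. by rewrite ZopE; apply: zpair_derivation. Qed.

Lemma partially_derivableC_Zop A a f : smoothC f -> partially_derivableC (Zop A a f).
Proof.
move=> sf; rewrite ZopE; apply: partially_derivableC_add;
  by apply: partially_derivableC_scale; apply: partially_derivableC_Xc.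
Qed.

Lemma Xc_commutator k l f x : (0 < k <= 4 * n)%N -> (0 < l <= 4 * n)%N -> smoothC f ->
  Xc k (Xc l f) x - Xc l (Xc k f) x = (heis_bracket R k l)%:C * cplx (@pdt R n) f x.
Proof. by move=> kn ln; apply: cplx_commutator => g; apply: Xr_commutator. Qed.

Lemma zpair_commutator m m' c1 c2 d1 d2 f x :
  (m < 2 * n)%N -> (m' < 2 * n)%N -> smoothC f ->
  zpair m c1 c2 (zpair m' d1 d2 f) x - zpair m' d1 d2 (zpair m c1 c2 f) x =
  (if m == m' then 4 * (c1 * d2 - c2 * d1) else 0) * cplx (@pdt R n) f x.
Proof.
move=> mn m'n sf.
have Xc_zpair k p e1 e2 : Xc k (zpair p e1 e2 f) x =
    e1 * Xc k (Xc (2 * p).+1 f) x + e2 * Xc k (Xc (2 * p).+2 f) x.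
  have dX j : partially_derivableC (Xc j f) by apply: partially_derivableC_Xc.
  rewrite /zpair (derivationD (Xc_derivation k)) ?(derivationZ (Xc_derivation k)) //;
    exact: partially_derivableC_scale.
have swap k l : (0 < k <= 4 * n)%N -> (0 < l <= 4 * n)%N ->
    Xc k (Xc l f) x = Xc l (Xc k f) x + (heis_bracket R k l)%:C * cplx (@pdt R n) f x.
  by move=> kn ln; rewrite -(Xc_commutator x kn ln sf) addrC subrK.
rewrite !zpairE !Xc_zpair.
rewrite (swap (2 * m).+1 (2 * m').+1) ?(swap (2 * m).+1 (2 * m').+2)
        ?(swap (2 * m).+2 (2 * m').+1) ?(swap (2 * m).+2 (2 * m').+2); try lia.
have [-> -> -> ->] : [/\ heis_bracket R (2 * m).+1 (2 * m').+1 = 0,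
    heis_bracket R (2 * m).+1 (2 * m').+2 = if m == m' then 4 else 0,
    heis_bracket R (2 * m).+2 (2 * m').+1 = if m == m' then -4 else 0 &
    heis_bracket R (2 * m).+2 (2 * m').+2 = 0].
  by rewrite /heis_bracket /= !oddM /=; split => //; repeat case: eqP => ? //=; exfalso; lia.
move: (cplx (@pdt R n) f x) => T; case: (m == m');
  rewrite ?rmorph0 ?rmorphN ?rmorph_nat; abstract_derivatives; ring.
Qed.

Definition zbracket A a B b : C :=
  if zindex A a == zindex B b
  then 4 * (zcoef1 A a * zcoef2 B b - zcoef2 A a * zcoef1 B b) else 0.

Lemma Zop_commutator A a B b f x : smoothC f ->
  Zop A a (Zop B b f) x - Zop B b (Zop A a f) x = zbracket A a B b * cplx (@pdt R n) f x.
Proof. by move=> sf; rewrite !ZopE zpair_commutator ?zindex_lt. Qed.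

Lemma zbracket_diag A B a : zbracket A a B a = 0.
Proof.
rewrite /zbracket; case: eqP => [/zindex_inj -> | //].
by rewrite (mulrC (zcoef1 _ _)) subrr mulr0.
Qed.

Lemma zbracket_mixed A B : zbracket A false B true = zbracket B false A true.
Proof.
rewrite /zbracket /zindex /zcoef1 /zcoef2; have := ltn_ord A; have := ltn_ord B.
case: (ltnP A n) => hA; case: (ltnP B n) => hB /= hB' hA';
  by repeat case: eqP => ? /=; rewrite ?mul1r ?mulr1 ?mulrN1 ?opprK //; exfalso; lia.
Qed.

Lemma ZopC A B a f x : smoothC f -> Zop A a (Zop B a f) x = Zop B a (Zop A a f) x.
Proof.
by move=> sf; apply/eqP; rewrite -subr_eq0 Zop_commutator // zbracket_diag mul0r.
Qed.

Lemma Zop_mixed_sym A B f x : smoothC f ->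
  Zop A false (Zop B true f) x + Zop A true (Zop B false f) x =
  Zop B false (Zop A true f) x + Zop B true (Zop A false f) x.
Proof.
move=> sf; have E1 := Zop_commutator A false B true x sf.
have E2 := Zop_commutator B false A true x sf.
rewrite zbracket_mixed in E1.
rewrite -[Zop A false _ x](subrK (Zop B true (Zop A false f) x)) E1.
rewrite -[Zop B false _ x](subrK (Zop A true (Zop B false f) x)) E2.
by rewrite addrAC.
Qed.

End ZOperators.

Local Close Scope complex_scope.
Local Close Scope classical_set_scope.

Section Inversions.
Variable n : nat.
Local Notation T := 'I_(2 * n).
Implicit Types (I J : {set T}) (A B : T).

Definition inversions I J : nat :=
  #|[set ij : T * T | [&& ij.1 \in I, ij.2 \in J & (ij.2 < ij.1)%N]]|.

Lemma inversionsE I J :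
  inversions I J = (\sum_(i : T) \sum_(j : T) [&& i \in I, j \in J & (j < i)%N])%N.
Proof.
rewrite pair_big /= /inversions -sum1_card big_mkcond /=.
by apply: eq_bigr => -[i j] _; rewrite inE; case: [&& _, _ & _].
Qed.

Lemma inversionsUl I I' J : [disjoint I & I'] ->
  inversions (I :|: I') J = (inversions I J + inversions I' J)%N.
Proof.
move=> dis; rewrite !inversionsE -big_split; apply: eq_bigr => i _.
rewrite -big_split; apply: eq_bigr => j _; rewrite finset.in_setU.
by case: (boolP (i \in I)) => [/(disjointFr dis) -> | _] /=; rewrite ?addn0.
Qed.

Lemma inversionsUr I J J' : [disjoint J & J'] ->
  inversions I (J :|: J') = (inversions I J + inversions I J')%N.
Proof.
move=> dis; rewrite !inversionsE -big_split; apply: eq_bigr => i _.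
rewrite -big_split; apply: eq_bigr => j _; rewrite finset.in_setU.
case: (i \in I) => //=.
by case: (boolP (j \in J)) => [/(disjointFr dis) -> | _] /=; rewrite ?addn0.
Qed.

Lemma inversions1 A J : inversions [set A] J = #|[set j in J | (j < A)%N]|.
Proof.
rewrite inversionsE (bigD1 A) //= [X in (_ + X)%N]big1 ?addn0 => [|i /negbTE iA].
  rewrite -sum1_card [RHS]big_mkcond.
  by apply: eq_bigr => j _; rewrite finset.in_set1 eqxx inE.
by apply: big1 => j _; rewrite finset.in_set1 iA.
Qed.

Lemma inversions11 A B : inversions [set A] [set B] = (B < A)%N.
Proof.
rewrite inversions1 -sum1_card big_mkcond (bigD1 B) //= [X in (_ + X)%N]big1 ?addn0.
  by rewrite inE finset.in_set1 eqxx; case: (B < A)%N.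
by move=> j /negbTE jB; rewrite inE finset.in_set1 jB.
Qed.

Lemma inversions_set1C A I : A \notin I ->
  (inversions I [set A] + inversions [set A] I)%N = #|I|.
Proof.
move=> AI; rewrite inversions1 inversionsE -!sum1_card.
have inner i :
    (\sum_(j : T) [&& i \in I, j \in [set A] & (j < i)%N])%N = [&& i \in I & (A < i)%N].
  rewrite (bigD1 A) //= [X in (_ + X)%N]big1 ?addn0 ?finset.in_set1 ?eqxx //.
  by move=> j /negbTE jA; rewrite finset.in_set1 jA andbF.
rewrite (eq_bigr _ (fun i _ => inner i)).
rewrite [X in (_ + X)%N]big_mkcond [RHS]big_mkcond -big_split /=; apply: eq_bigr => i _.
rewrite inE; case: (boolP (i \in I)) => //= iI.
have iA : i != A by apply: contraNneq AI => <-.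
by case: ltngtP iA => // /val_inj ->; rewrite eqxx.
Qed.

End Inversions.

Section ReindexSums.
Variable K : pzRingType.

Lemma sum_collapse (S U1 U2 V : finType) (Pc : S -> V -> bool) (w : S -> V -> K)
    (Q : U1 -> U2 -> bool) (h : U1 -> U2 -> S) (w' : U1 -> U2 -> K)
    (Z : U1 -> U2 -> V -> K) :
  \sum_(I : S) \sum_(A : V) (if Pc I A then w I A *
      \sum_(J : U1) \sum_(B : U2) (if Q J B && (h J B == I) then w' J B * Z J B A else 0)
    else 0)
  = \sum_(J : U1) \sum_(B : U2) \sum_(A : V)
      (if Q J B && Pc (h J B) A then w (h J B) A * w' J B * Z J B A else 0).
Proof.
have E I A : (if Pc I A then w I A *
      \sum_(J : U1) \sum_(B : U2) (if Q J B && (h J B == I) then w' J B * Z J B A else 0)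
    else 0) = \sum_(J : U1) \sum_(B : U2)
      (if Q J B && (h J B == I) && Pc I A then w I A * w' J B * Z J B A else 0).
  case: (Pc I A); last by rewrite big1 // => J _; rewrite big1 // => B _; rewrite andbF.
  rewrite mulr_sumr; apply: eq_bigr => J _; rewrite mulr_sumr; apply: eq_bigr => B _.
  by rewrite andbT; case: ifP; rewrite ?mulr0 ?mulrA.
rewrite (eq_bigr _ (fun I _ => eq_bigr _ (fun A _ => E I A))) exchange_big /=.
rewrite (eq_bigr (fun A => \sum_(J : U1) \sum_(B : U2) \sum_(I : S)
   (if Q J B && (h J B == I) && Pc I A then w I A * w' J B * Z J B A else 0))); last first.
  by move=> A _; rewrite exchange_big /=; apply: eq_bigr => J _; apply: exchange_big.
rewrite exchange_big /=; apply: eq_bigr => J _; rewrite exchange_big /=.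
apply: eq_bigr => B _; apply: eq_bigr => A _.
rewrite (bigD1 (h J B)) //= eqxx andbT big1 ?addr0 // => I /negbTE hI.
by rewrite eq_sym hI andbF.
Qed.

End ReindexSums.

Lemma sum_antisym (K : numDomainType) (I : finType) (g : I -> I -> K) :
  (forall a b, g b a = - g a b) -> \sum_a \sum_b g a b = 0.
Proof.
move=> gN; set s := \sum_a \sum_b g a b.
have : s = - s by rewrite {1}/s exchange_big -sumrN; apply: eq_bigr => b _;
  rewrite -sumrN; apply: eq_bigr => a _; apply: gN.
by move/eqP; rewrite -subr_eq0 opprK -mulr2n -mulr_natl mulf_eq0 pnatr_eq0 => /eqP.
Qed.

Section WedgeSigns.
Variables (R : realType) (n : nat).
Local Notation T := 'I_(2 * n).
Local Notation C := R[i].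
Implicit Types (I J : {set T}) (A B : T).

Lemma wsgnE I J : wsgn R I J = (-1) ^+ inversions I J.
Proof. by []. Qed.

Lemma wsgn_swap A B J : A != B -> A \notin J -> B \notin J ->
  wsgn R [set B] (A |: J) * wsgn R [set A] J =
  - (wsgn R [set A] (B |: J) * wsgn R [set B] J).
Proof.
move=> AB AJ BJ; rewrite !wsgnE !inversionsUr ?disjoints1 // !inversions11 !exprD.
by case: (ltngtP A B) AB => [_ _|_ _|/val_inj -> /eqP //] /=; rewrite expr0 expr1; ring.
Qed.

Lemma wsgnUl A I J : [disjoint I & J] -> A \notin I ->
  wsgn R [set A] (I :|: J) * wsgn R I J = wsgn R (A |: I) J * wsgn R [set A] I.
Proof.
move=> dIJ AI; rewrite !wsgnE inversionsUr // inversionsUl ?disjoints1 // !exprD; ring.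
Qed.

Lemma wsgnUr A I J : [disjoint I & J] -> A \notin I -> A \notin J ->
  wsgn R [set A] (I :|: J) * wsgn R I J =
  (-1) ^+ #|I| * (wsgn R I (A |: J) * wsgn R [set A] J).
Proof.
move=> dIJ AI AJ; rewrite !wsgnE inversionsUr // inversionsUr ?disjoints1 //.
rewrite -(inversions_set1C AI) !exprD.
have sq k : ((-1 : C) ^+ k) * (-1) ^+ k = 1 by rewrite -expr2 sqrr_sign.
move: (sq (inversions I [set A])); move: ((-1 : C) ^+ inversions I [set A]) => s ss.
rewrite -[LHS]mul1r -ss; ring.
Qed.

End WedgeSigns.

Section DOperators.
Variables (R : realType) (n : nat).
Local Notation T := 'I_(2 * n).
Local Notation S := {set 'I_(2 * n)}.
Local Notation C := R[i].
Local Notation P := (pt R n).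
Implicit Types (F G : hform R n) (I J K : S) (A B : T) (a b : bool).

Lemma Zop_sum2 A a (U1 U2 : Type) (r1 : seq U1) (r2 : seq U2) (Q : U1 -> U2 -> bool)
    (w : U1 -> U2 -> C) (F : U1 -> U2 -> P -> C) x :
  (forall i j, partially_derivableC (F i j)) ->
  Zop A a (fun y => \sum_(i <- r1) \sum_(j <- r2) (if Q i j then w i j * F i j y else 0)) x =
  \sum_(i <- r1) \sum_(j <- r2) (if Q i j then w i j * Zop A a (F i j) x else 0).
Proof.
exact: (derivation_sum2 (Zop_derivation R A a) (@partially_derivableC_cst R n 0)
  (@partially_derivableC_add R n) (@partially_derivableC_scale R n)).
Qed.

Definition dd_support A B J K :=
  (B \notin J) && ((A \notin B |: J) && (A |: (B |: J) == K)).

Lemma dd_supportC A B J K : dd_support A B J K = dd_support B A J K.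
Proof.
rewrite /dd_support !finset.in_setU1 finset.setUCA (eq_sym A B).
by case: (B == A); case: (A \in J); case: (B \in J).
Qed.

Lemma dd_support_distinct A B J K :
  dd_support A B J K -> [/\ A != B, A \notin J & B \notin J].
Proof. by rewrite /dd_support finset.in_setU1 negb_or => /and3P[-> /andP[-> ->]]. Qed.

Lemma dop_dopE a b F K x : (forall J, smoothC (F J)) ->
  dop a (dop b F) K x = \sum_J \sum_B \sum_A
     (if dd_support A B J K
      then wsgn R [set A] (B |: J) * wsgn R [set B] J * Zop A a (Zop B b (F J)) x else 0).
Proof.
move=> sF; have dF J B := partially_derivableC_Zop B b (sF J).
rewrite /dop; under eq_bigr => I _ do under eq_bigr => A _ do rewrite Zop_sum2 //.
exact: sum_collapse.
Qed.

Lemma sum_dd_support_sym K (Tm : S -> T -> T -> C) :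
  (forall J A B, dd_support A B J K -> Tm J A B = Tm J B A) ->
  \sum_J \sum_B \sum_A
     (if dd_support A B J K then wsgn R [set A] (B |: J) * wsgn R [set B] J * Tm J A B else 0)
  = 0.
Proof.
move=> Tsym; rewrite big1 // => J _; apply: sum_antisym => A B.
rewrite (dd_supportC A B); case: ifP => [supp | _]; last by rewrite oppr0.
have [BA BJ AJ] := dd_support_distinct supp.
by rewrite (Tsym _ _ _ supp) (wsgn_swap R BA BJ AJ) mulNr.
Qed.

Lemma dop_dop_eq0 a F : (forall J, smoothC (F J)) -> dop a (dop a F) = @zero_form R n.
Proof.
move=> sF; apply/funext => K; apply/funext => x.
by rewrite dop_dopE // sum_dd_support_sym // => J A B _; apply: ZopC.
Qed.

Lemma dop_anticomm F : (forall J, smoothC (F J)) ->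
  dop false (dop true F) = (fun K x => - dop true (dop false F) K x).
Proof.
move=> sF; apply/funext => K; apply/funext => x; apply/eqP; rewrite -addr_eq0; apply/eqP.
rewrite !dop_dopE // -big_split /= -[RHS](sum_dd_support_sym (K := K)
  (Tm := fun J A B => Zop A false (Zop B true (F J)) x + Zop A true (Zop B false (F J)) x)).
  apply: eq_bigr => J _; rewrite -big_split /=; apply: eq_bigr => B _.
  rewrite -big_split /=; apply: eq_bigr => A _.
  by case: (dd_support A B J K); rewrite ?mulrDr ?addr0.
by move=> J A B _; apply: Zop_mixed_sym.
Qed.

Definition leibniz_support A I J K :=
  [disjoint I & J] && ((A \notin I :|: J) && (A |: (I :|: J) == K)).

Lemma disjointU1s A I J : [disjoint A |: I & J] = (A \notin J) && [disjoint I & J].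
Proof. by rewrite -disjointU1; apply: eq_disjoint => y; rewrite finset.in_setU1 !inE. Qed.

Lemma leibniz_supportl A I J K :
  (A \notin I) && ([disjoint A |: I & J] && ((A |: I) :|: J == K)) = leibniz_support A I J K.
Proof.
rewrite /leibniz_support disjointU1s -finset.setUA finset.in_setU.
by case: (A \in I); case: (A \in J); case: [disjoint I & J].
Qed.

Lemma leibniz_supportr A I J K :
  (A \notin J) && ([disjoint I & A |: J] && (I :|: (A |: J) == K)) = leibniz_support A I J K.
Proof.
have -> : [disjoint I & A |: J] = (A \notin I) && [disjoint I & J].
  by rewrite [LHS]disjoint_sym disjointU1s (disjoint_sym J).
rewrite /leibniz_support finset.setUCA finset.in_setU.
by case: (A \in I); case: (A \in J); case: [disjoint I & J].
Qed.

Lemma dop_wedgeE a F G K x : (forall I, smoothC (F I)) -> (forall J, smoothC (G J)) ->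
  dop a (wedge F G) K x = \sum_I \sum_J \sum_A
   (if leibniz_support A I J K then wsgn R [set A] (I :|: J) * wsgn R I J *
      (Zop A a (F I) x * G J x + F I x * Zop A a (G J) x) else 0).
Proof.
move=> sF sG; have dF I := smoothC_partially_derivable (sF I).
have dG J := smoothC_partially_derivable (sG J).
have dFG I J := partially_derivableC_mul (dF I) (dG J).
rewrite /dop; under eq_bigr => I' _ do under eq_bigr => A _ do rewrite Zop_sum2 //.
under eq_bigr => I' _ do under eq_bigr => A _ do under eq_bigr => I _ do
  under eq_bigr => J _ do rewrite (derivationM (Zop_derivation R A a) _ (dF I) (dG J)).
exact: sum_collapse.
Qed.

Lemma wedge_doplE a F G K x :
  wedge (dop a F) G K x = \sum_(I : S) \sum_(J : S) \sum_(A : T)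
   (if (A \notin I) && ([disjoint A |: I & J] && ((A |: I) :|: J == K))
    then wsgn R (A |: I) J * wsgn R [set A] I * (Zop A a (F I) x * G J x) else 0).
Proof.
have -> : wedge (dop a F) G K x =
    \sum_(I' : S) \sum_(J : S) (if [disjoint I' & J] && (I' :|: J == K)
    then wsgn R I' J * \sum_(I : S) \sum_(A : T) (if (A \notin I) && (A |: I == I')
      then wsgn R [set A] I * (Zop A a (F I) x * G J x) else 0) else 0).
  apply: eq_bigr => I' _; apply: eq_bigr => J _; case: (_ && _) => //; congr (_ * _).
  rewrite /dop mulr_suml; apply: eq_bigr => I _; rewrite mulr_suml; apply: eq_bigr => A _.
  by case: (_ && _); rewrite ?mulrA ?mul0r.
by rewrite sum_collapse; apply: eq_bigr => I _; rewrite exchange_big.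
Qed.

Lemma wedge_doprE a F G K x :
  wedge F (dop a G) K x = \sum_(I : S) \sum_(J : S) \sum_(A : T)
   (if (A \notin J) && ([disjoint I & A |: J] && (I :|: (A |: J) == K))
    then wsgn R I (A |: J) * wsgn R [set A] J * (F I x * Zop A a (G J) x) else 0).
Proof.
have -> : wedge F (dop a G) K x =
    \sum_(J' : S) \sum_(I : S) (if [disjoint I & J'] && (I :|: J' == K)
    then wsgn R I J' * \sum_(J : S) \sum_(A : T) (if (A \notin J) && (A |: J == J')
      then wsgn R [set A] J * (F I x * Zop A a (G J) x) else 0) else 0).
  rewrite /wedge exchange_big /=; apply: eq_bigr => J' _; apply: eq_bigr => I _.
  case: (_ && _) => //; congr (_ * _).
  rewrite /dop mulr_sumr; apply: eq_bigr => J _; rewrite mulr_sumr; apply: eq_bigr => A _.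
  by case: (_ && _); [rewrite mulrCA | rewrite mulr0].
rewrite sum_collapse; under eq_bigr => J _ do rewrite exchange_big /=.
by rewrite [LHS]exchange_big.
Qed.

Lemma dop_wedge a p F G : (forall I, smoothC (F I)) -> (forall J, smoothC (G J)) ->
  is_pform p F ->
  dop a (wedge F G) =
  (fun K x => wedge (dop a F) G K x + (-1) ^+ p * wedge F (dop a G) K x).
Proof.
move=> sF sG pF; apply/funext => K; apply/funext => x.
rewrite dop_wedgeE // wedge_doplE wedge_doprE mulr_sumr -big_split /=.
apply: eq_bigr => I _; rewrite mulr_sumr -big_split /=.
apply: eq_bigr => J _; rewrite mulr_sumr -big_split /=.
apply: eq_bigr => A _.
rewrite leibniz_supportl leibniz_supportr.
case supp: (leibniz_support A I J K); last by rewrite /= mulr0 addr0.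
move: supp => /andP[dIJ /andP[]]; rewrite finset.in_setU negb_or => /andP[AI AJ] _.
have [<- | Ip] := eqVneq #|I| p.
  rewrite mulrDr {1}(wsgnUl R dIJ AI); congr (_ + _).
  by rewrite (wsgnUr R dIJ AI AJ) [RHS]mulrA.
rewrite (pF I Ip) (derivation0 (Zop_derivation R A a)) /=; last first.
  exact: partially_derivableC_cst.
by rewrite !(mul0r, mulr0, addr0).
Qed.

End DOperators.

Local Open Scope classical_set_scope.

Theorem proposition1p1 (R : realType) (n : nat) (Omega : set (pt R n))
    (alpha : bool) :
  domain Omega ->
  (* (1) d_0^2 = d_1^2 = 0 on C_0^infty(Omega, /\^p C^{2n}) *)
  (forall (p : nat) (F : hform R n), C0inf_form Omega p F ->
     dop false (dop false F) = @zero_form R n /\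
     dop true (dop true F) = @zero_form R n) /\
  (* (2) d_0 d_1 = - d_1 d_0 *)
  (forall (p : nat) (F : hform R n), C0inf_form Omega p F ->
     dop false (dop true F) = (fun K x => - dop true (dop false F) K x)) /\
  (* (3) Leibniz rule *)
  (forall (p q : nat) (F G : hform R n),
     C0inf_form Omega p F -> C0inf_form Omega q G ->
     dop alpha (wedge F G) =
     (fun K x => wedge (dop alpha F) G K x + (-1) ^+ p * wedge F (dop alpha G) K x)).
Proof.
(* The identities hold pointwise for smooth forms. *)
move=> _.
have smoothF p F : C0inf_form Omega p F -> forall I, smoothC (F I).
  by move=> [_ CF] I; have [sr [si _]] := CF I; split.
split; [|split].
- by move=> p F /smoothF sF; split; apply: dop_dop_eq0.
- by move=> p F /smoothF; apply: dop_anticomm.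
- move=> p q F G CF CG.
  exact: dop_wedge (smoothF _ _ CF) (smoothF _ _ CG) CF.1.
Qed.
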